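(* There exists an orthogonal design $OD\big(2^{10};\ 2^6_{(16)}\big)$, i.e. a $2^{10}\times2^{10}$ matrix $X$ with entries in $\{0,\pm z_1,\ldots,\pm z_{16}\}$ such that $XX^{\rm T}=\big(2^6\sum_{i=1}^{16}z_i^2\big)I_{2^{10}}$.
   Context: The notation $u_{(k)}$ in a type means that $u$ is repeated $k$ times. $z_1,\ldots,z_{16}$ are commuting indeterminates. An orthogonal design $OD(m;c_1,\ldots,c_k)$ is an $m\times m$ matrix with entries from $\{0,\pm z_1,\ldots,\pm z_k\}$ satisfying $XX^{\rm T}=(\sum_j c_jz_j^2)I_m$. *)

From HB Require Import structures.
From mathcomp Require Import all_boot all_order all_algebra.
Set Implicit Arguments. Unset Strict Implicit. Unset Printing Implicit Defensive.
Import GRing.Theory.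
Local Open Scope ring_scope.

(* An entry of an orthogonal design with k variables: either 0 (None) or
   +/- z_i, encoded as Some (s, i) meaning (-1)^s * z_i. *)
Definition od_entry_t (k : nat) := option (bool * 'I_k).

Definition od_eval (R : pzRingType) (k : nat) (z : 'I_k -> R)
    (e : od_entry_t k) : R :=
  match e with
  | None => 0
  | Some (s, i) => (-1) ^+ s * z i
  end.

(* X is an OD(m; c_1,...,c_k): the identity X X^T = (sum_j c_j z_j^2) I_m
   holds in the commuting indeterminates z_1..z_k, i.e. for every
   evaluation of the z_j in every (nontrivial) commutative ring
   (in particular in the polynomial ring Z[z_1..z_k] itself). *)
Definition is_OD (m k : nat) (c : 'I_k -> nat) (X : 'M[od_entry_t k]_m) : Prop :=
  forall (R : comNzRingType) (z : 'I_k -> R),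
    let Xz := map_mx (od_eval z) X in
    Xz *m Xz^T = (\sum_(j < k) (c j)%:R * z j ^+ 2)%:M.

From mathcomp Require Import all_boot all_order all_algebra.
From mathcomp Require Import ring.
Set Implicit Arguments. Unset Strict Implicit. Unset Printing Implicit Defensive.
Import GRing.Theory.
Local Open Scope ring_scope.

(* Index rows and columns by pairs g = (g1, g2) in F_2^4 x F_2^6 and the
   sixteen variables by F_2^4, and put at (g, h) the variable z_(g1 + h1) with
   sign (-1)^(<g2 + A(g1 + h1), h2> + <beta(g1 + h1), g>) for maps
   A : F_2^4 -> F_2^6 and beta : F_2^4 -> F_2^4 x F_2^6.  In the product of
   rows g and g', summing over h2 first leaves, by orthogonality of the
   characters of F_2^6, 2^6 times a sum over a = g1 + h1 restricted to
   g2 + A(a) = g2' + A(a + g1 + g1').  For g1 = g1' this is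
   2^6 (sum_a z_a^2) [g2 = g2'].  For g1 <> g1' the involution
   a |-> a + g1 + g1' pairs off the terms with opposite signs, as soon as
   <beta(a) + beta(b), (a + b, A(a) + A(b))> = 1 whenever a <> b; explicit
   tables for A and beta satisfying this finite condition finish the proof. *)

Definition bvec n := {ffun 'I_n -> bool}.

Section BoolVectors.
Variable n : nat.
Implicit Types x y u v : bvec n.

Definition bvec_add x y : bvec n := [ffun k => x k (+) y k].
Definition bvec_dot x y : bool := \big[addb/false]_(k < n) (x k && y k).

Lemma bvec_addA : associative bvec_add.
Proof. by move=> x y u; apply/ffunP => k; rewrite !ffunE addbA. Qed.

Lemma bvec_addC : commutative bvec_add.
Proof. by move=> x y; apply/ffunP => k; rewrite !ffunE addbC. Qed.

Lemma bvec_addKv x : involutive (bvec_add x).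
Proof. by move=> y; apply/ffunP => k; rewrite !ffunE addbA addbb. Qed.

Lemma bvec_add_inj x : injective (bvec_add x).
Proof. exact/inv_inj/bvec_addKv. Qed.

Lemma bvec_add_eq x y u v :
  (bvec_add x u == bvec_add y v) = (bvec_add x y == bvec_add u v).
Proof.
apply/eqP/eqP => /ffunP eq_k; apply/ffunP => k; move: (eq_k k); rewrite !ffunE.
  by case: (x k) (y k) (u k) (v k) => [] [] [] [].
by case: (x k) (y k) (u k) (v k) => [] [] [] [].
Qed.

Lemma bvec_dotDr u x y : bvec_dot u (bvec_add x y) = bvec_dot u x (+) bvec_dot u y.
Proof.
rewrite /bvec_dot -big_split /=; apply: eq_bigr => k _.
by rewrite ffunE; case: (u k).
Qed.

Lemma bvec_dotDl u v x : bvec_dot (bvec_add u v) x = bvec_dot u x (+) bvec_dot v x.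
Proof.
rewrite /bvec_dot -big_split /=; apply: eq_bigr => k _.
by rewrite ffunE; case: (x k); rewrite ?andbT ?andbF.
Qed.

Lemma card_bvec : #|{: bvec n}| = (2 ^ n)%N.
Proof. by rewrite card_ffun card_bool card_ord. Qed.

Lemma sum_sign_bvec_dot (R : comPzRingType) u v :
  \sum_(x : bvec n) (-1) ^+ bvec_dot u x * (-1) ^+ bvec_dot v x
    = (2 ^ n)%:R *+ (u == v) :> R.
Proof.
have sign_dot w x : (-1) ^+ bvec_dot w x = \prod_k (-1) ^+ (w k && x k) :> R.
  by apply: (big_morph _ (@signr_addb R)); rewrite expr0.
under eq_bigr => x _ do rewrite !sign_dot -big_split /=.
rewrite -(bigA_distr_bigA (fun k b => (-1) ^+ (u k && b) * (-1) ^+ (v k && b))) /=.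
under eq_bigr => k _ do rewrite big_bool /= !andbT !andbF expr0 mulr1.
have [<-|neq_uv] := eqVneq u v.
  under eq_bigr => k _ do rewrite -expr2 sqrr_sign.
  by rewrite prodr_const card_ord natrX.
have [k neq_k] : exists k, u k != v k.
  apply/existsP; apply: contraNT neq_uv => /existsPn eq_uv.
  by apply/eqP/ffunP => k; apply/eqP/negbNE.
rewrite (bigD1 k) //=; move: neq_k.
by case: (u k) (v k) => [] [] //= _; rewrite ?expr0 ?expr1 ?mulN1r ?mulr1 ?mul1r ?addNr ?addrN mul0r.
Qed.

End BoolVectors.

Notation bpair m n := (bvec m * bvec n)%type.

Section BoolPairs.
Variables m n : nat.
Implicit Types u v w : bpair m n.

Definition bpair_add u v : bpair m n := (bvec_add u.1 v.1, bvec_add u.2 v.2).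
Definition bpair_dot u v : bool := bvec_dot u.1 v.1 (+) bvec_dot u.2 v.2.

Lemma bpair_dotDr u v w : bpair_dot u (bpair_add v w) = bpair_dot u v (+) bpair_dot u w.
Proof. by rewrite /bpair_dot !bvec_dotDr addbACA. Qed.

Lemma bpair_dotDl u v w : bpair_dot (bpair_add u v) w = bpair_dot u w (+) bpair_dot v w.
Proof. by rewrite /bpair_dot !bvec_dotDl addbACA. Qed.

Lemma card_bpair : #|{: bpair m n}| = (2 ^ (m + n))%N.
Proof. by rewrite card_prod !card_bvec expnD. Qed.

End BoolPairs.

(* Pairing i with s i instead of showing that the sum equals its opposite keeps
   the lemma valid in characteristic 2. *)
Lemma sumr_opp_involution (V : zmodType) (I : finType) (s : I -> I) (F : I -> V) :
  involutive s -> (forall i, s i != i) -> (forall i, F (s i) = - F i) ->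
  \sum_i F i = 0.
Proof.
move=> sK s_neq FsN; pose r (i : I) : nat := enum_rank i.
rewrite (bigID (fun i => r i < r (s i))%N) /= [X in _ + X](reindex_inj (inv_inj sK)) /=.
have -> : \sum_(i | ~~ (r (s i) < r (s (s i)))%N) F (s i)
        = \sum_(i | (r i < r (s i))%N) - F i.
  apply: eq_big => [i|i _]; last exact: FsN.
  rewrite sK -leqNgt leq_eqVlt orbC; case: ltngtP => //= /val_inj/enum_rank_inj si_i.
  by have := s_neq i; rewrite -si_i eqxx.
by rewrite sumrN subrr.
Qed.

Section SignedDesign.
Variables (m n : nat) (A : bvec m -> bvec n) (beta : bvec m -> bpair m n).
Implicit Types (a b : bvec m) (g h : bpair m n).

Definition design_var g h : bvec m := bvec_add g.1 h.1.

Definition design_sign g h : bool :=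
  bvec_dot (bvec_add g.2 (A (design_var g h))) h.2 (+)
  bpair_dot (beta (design_var g h)) g.

Variables (R : comPzRingType) (y : bvec m -> R).

Definition design_entry g h : R := (-1) ^+ design_sign g h * y (design_var g h).

Definition design_cross g g' a : R :=
  let b := bvec_add (bvec_add g'.1 g.1) a in
  ((-1) ^+ (bpair_dot (beta a) g (+) bpair_dot (beta b) g') * (y a * y b))
    *+ (bvec_add g.2 (A a) == bvec_add g'.2 (A b)).

Lemma design_row_product g g' :
  \sum_h design_entry g h * design_entry g' h
    = (2 ^ n)%:R * \sum_a design_cross g g' a.
Proof.
case: g g' => [g1 g2] [g1' g2'].
transitivity (\sum_h1 \sum_h2 design_entry (g1, g2) (h1, h2) * design_entry (g1', g2') (h1, h2)).
  by rewrite pair_bigA; apply: eq_bigr => -[].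
rewrite (reindex_inj (@bvec_add_inj _ g1)) mulr_sumr /=.
apply: eq_bigr => a _; rewrite /design_cross mulrnAr -mulrnAl -sum_sign_bvec_dot mulr_suml.
apply: eq_bigr => h2 _; rewrite /design_entry /design_sign /design_var /=.
rewrite bvec_addKv bvec_addA !signr_addb; ring.
Qed.

Lemma design_cross_diag g g' :
  g.1 = g'.1 -> \sum_a design_cross g g' a = (\sum_a y a ^+ 2) *+ (g == g').
Proof.
case: g g' => [g1 g2] [g1' g2'] /= <-; rewrite xpair_eqE eqxx /=.
under eq_bigr => a _ do rewrite /design_cross /= -bvec_addA bvec_addKv
  ![bvec_add _ (A a)]bvec_addC (inj_eq (@bvec_add_inj _ _)).
have [<-|_] := eqVneq g2 g2'; last by rewrite mulr0n big1 // => a _; rewrite mulr0n.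
by rewrite mulr1n; apply: eq_bigr => a _; rewrite addbb expr0 mul1r mulr1n expr2.
Qed.

Hypothesis beta_separates : forall a b, a != b ->
  bpair_dot (bpair_add (beta a) (beta b)) (bvec_add a b, bvec_add (A a) (A b)).

Lemma design_cross_offdiag g g' : g.1 != g'.1 -> \sum_a design_cross g g' a = 0.
Proof.
case: g g' => [g1 g2] [g1' g2'] /= neq_g1; set d := bvec_add g1' g1.
have d_neq a : bvec_add d a != a.
  apply: contraNneq neq_g1 => eq_da; apply/eqP/ffunP => k.
  have := congr1 (fun f : bvec m => f k) eq_da; rewrite !ffunE.
  by case: (g1 k) (g1' k) (a k) => [] [] [].
apply: (sumr_opp_involution (@bvec_addKv _ d) d_neq) => a.
rewrite /design_cross /= bvec_addKv; set b := bvec_add d a.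
rewrite bvec_add_eq [X in _ == X]bvec_addC -bvec_add_eq.
case: eqP => [/eqP|_]; last by rewrite !mulr0n oppr0.
rewrite bvec_add_eq => /eqP eq_g2.
pose w := (bvec_add a b, bvec_add (A a) (A b)).
have g'E : (g1', g2') = bpair_add (g1, g2) w.
  congr pair; last by rewrite /= -eq_g2 bvec_addKv.
  apply/ffunP => k; rewrite !ffunE.
  by case: (g1 k) (g1' k) (a k) => [] [] [].
have neq_ab : a != b by rewrite eq_sym d_neq.
have := beta_separates neq_ab; rewrite bpair_dotDl -/w => /addbP sign_w.
by rewrite g'E !bpair_dotDr -sign_w !addbN signrN addbCA !mulr1n mulNr opprK [y b * _]mulrC.
Qed.

Lemma design_rows_orthogonal g g' :
  \sum_h design_entry g h * design_entry g' h
    = ((2 ^ n)%:R * \sum_a y a ^+ 2) *+ (g == g').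
Proof.
rewrite design_row_product; have [eq_g1|neq_g1] := eqVneq g.1 g'.1.
  by rewrite design_cross_diag // mulrnAr.
have /negbTE -> : g != g' by apply: contraNneq neq_g1 => ->.
by rewrite design_cross_offdiag // mulr0.
Qed.

End SignedDesign.

Lemma is_OD_reindex (T I : finType) (N k c : nat) (s : T -> T -> bool) (v : T -> T -> I) :
  #|T| = N -> #|I| = k ->
  (forall (R : comNzRingType) (y : I -> R) g g',
      \sum_h ((-1) ^+ s g h * y (v g h)) * ((-1) ^+ s g' h * y (v g' h))
        = (c%:R * \sum_a y a ^+ 2) *+ (g == g')) ->
  exists X : 'M[od_entry_t k]_N, is_OD (fun _ => c) X.
Proof.
move=> cardT cardI rows_orth.
pose row (i : 'I_N) : T := enum_val (cast_ord (esym cardT) i).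
pose var (a : I) : 'I_k := cast_ord cardI (enum_rank a).
have row_bij : bijective row.
  by exists (fun g => cast_ord cardT (enum_rank g)) => [i|g]; rewrite /row;
    [rewrite enum_valK cast_ordKV | rewrite cast_ordK enum_rankK].
have var_bij : bijective var.
  by exists (fun j => enum_val (cast_ord (esym cardI) j)) => [a|j]; rewrite /var;
    [rewrite cast_ordK enum_rankK | rewrite enum_valK cast_ordKV].
exists (\matrix_(i, j) Some (s (row i) (row j), var (v (row i) (row j)))).
move=> R z /=; apply/matrixP => i i'; rewrite !mxE.
have [row_inv rowK row_invK] := row_bij.
rewrite (reindex row_inv) /=; last by exists row => ? _; [rewrite row_invK | rewrite rowK].
under eq_bigr => g _ do rewrite !mxE row_invK /=.
rewrite (rows_orth R (z \o var)) (bij_eq row_bij) -mulr_sumr.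
by rewrite [in RHS](reindex var) //=; exact: onW_bij.
Qed.

Definition bvec_of_seq n (s : seq bool) : bvec n := [ffun k : 'I_n => nth false s k].

Definition bvec_to_nat n (a : bvec n) : nat := \sum_(k < n) a k * 2 ^ k.

Definition bvec_lookup m n (t : seq (seq bool)) (a : bvec m) : bvec n :=
  bvec_of_seq n (nth [::] t (bvec_to_nat a)).

(* Row i of a table is the value at the vector whose binary digits, least
   significant first, spell i. *)
Definition A_table : seq (seq bool) :=
  [:: [:: false; false; false; false; false; false];
      [:: false; false; true; true; false; true];
      [:: true; true; false; true; true; true];
      [:: false; false; true; false; true; false];
      [:: false; true; false; true; false; false];
      [:: true; true; false; false; false; false];
      [:: true; false; false; false; true; true];
      [:: true; true; true; false; false; false];
      [:: true; false; false; true; true; false];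
      [:: false; false; false; false; false; true];
      [:: false; false; false; false; false; false];
      [:: true; true; false; false; false; false];
      [:: true; true; false; true; false; true];
      [:: true; false; true; true; false; true];
      [:: false; true; true; true; false; false];
      [:: false; false; false; true; false; true]].

Definition beta1_table : seq (seq bool) :=
  [:: [:: false; false; false; false];
      [:: false; true; true; true];
      [:: true; true; true; false];
      [:: true; true; false; true];
      [:: true; true; true; false];
      [:: false; false; false; false];
      [:: false; false; true; true];
      [:: true; true; true; false];
      [:: false; false; false; true];
      [:: false; false; true; true];
      [:: true; false; false; true];
      [:: false; false; false; true];
      [:: false; false; true; true];
      [:: false; true; false; true];
      [:: false; true; true; false];
      [:: false; false; true; false]].

Definition beta2_table : seq (seq bool) :=
  [:: [:: false; false; false; false; false; false];
      [:: false; false; false; true; true; false];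
      [:: true; true; false; false; true; true];
      [:: false; false; false; false; true; false];
      [:: false; true; false; true; true; true];
      [:: true; false; false; false; false; false];
      [:: true; false; false; false; true; false];
      [:: true; true; false; true; true; true];
      [:: true; true; false; false; true; false];
      [:: false; false; false; false; true; false];
      [:: true; true; true; true; true; false];
      [:: true; true; true; true; true; true];
      [:: true; false; false; false; false; false];
      [:: false; false; true; true; true; false];
      [:: true; true; true; true; true; true];
      [:: false; false; true; true; true; true]].

Definition od1024_A : bvec 4 -> bvec 6 := bvec_lookup 6 A_table.

Definition od1024_beta (a : bvec 4) : bpair 4 6 :=
  (bvec_lookup 4 beta1_table a, bvec_lookup 6 beta2_table a).

Lemma bvec4E (a : bvec 4) :
  a = bvec_of_seq 4 [:: a ord0; a (Ordinal (isT : 1 < 4)%N);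
                        a (Ordinal (isT : 2 < 4)%N); a ord_max].
Proof.
by apply/ffunP => -[[|[|[|[|k]]]] lt_k4] //; rewrite ffunE; congr (a _); apply: val_inj.
Qed.

Lemma od1024_beta_separates a b : a != b ->
  bpair_dot (bpair_add (od1024_beta a) (od1024_beta b))
            (bvec_add a b, bvec_add (od1024_A a) (od1024_A b)).
Proof.
rewrite [a]bvec4E [b]bvec4E.
move: (a _) (a _) (a _) (a _) (b _) (b _) (b _) (b _) => x3 x2 x1 x0 y3 y2 y1 y0.
case: (eqVneq [:: x0; x1; x2; x3] [:: y0; y1; y2; y3]) => [-> | + _]; first by rewrite eqxx.
rewrite /bpair_dot /bvec_dot /od1024_A /od1024_beta /bvec_lookup /bvec_to_nat.
rewrite !big_ord_recr !big_ord0 /= !ffunE /=.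
by case: x0; case: x1; case: x2; case: x3; case: y0; case: y1; case: y2; case: y3.
Qed.

Local Close Scope ring_scope.

Theorem theorem5p3 :
  exists X : 'M[od_entry_t 16]_(2 ^ 10)%N, is_OD (fun _ => 2 ^ 6) X.
Proof.
have cardT : #|{: bpair 4 6}| = 2 ^ 10 by rewrite card_bpair.
have cardI : #|{: bvec 4}| = 16 by rewrite card_bvec.
apply: (@is_OD_reindex _ _ _ _ _ (design_sign od1024_A od1024_beta) (@design_var 4 6)
          cardT cardI).
by move=> R y; apply: design_rows_orthogonal y od1024_beta_separates.
Qed.
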